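(* For any multi-valued lattice $\mathcal{L}$ there is no reduction of $\mathcal{L}$ to the 2-valued lattice of classical truth values that satisfies the translation condition ($[\![\varphi]\!]_{M,\xi}\in f^{-1}(x)$ iff $[\![\varphi]\!]_{f(M),\xi}=x$) for the whole language of mv-ATL*$_\to$.
   Context: A multi-valued lattice here is a finite lattice $\mathcal{L}=(L,\leq)$ with more than two elements (meet $\sqcap$, join $\sqcup$, bottom $\bot$, top $\top$; for a family of elements, $\inf$ denotes its greatest lower bound and $\bigsqcup$ its least upper bound); any such lattice contains a chain or anti-chain of cardinality at least 3. A multi-valued concurrent game structure (mv-CGS) over an interpreted lattice $(L,\leq,\sigma)$ is $M=\langle \mathrm{Agt},Q,Act,d,t,AP,V,(L,\leq,\sigma)\rangle$ with finite sets of agents, states, actions and atomic propositions, action availability $d$, deterministic transition function $t$, valuation $V:AP\times Q\to L$, and $\sigma$ interpreting constant symbols in $L$. The logic mv-ATL*$_\to$ has state formulas $\varphi::=c\mid p\mid\varphi\wedge\varphi\mid\varphi\vee\varphi\mid\varphi\to\varphi\mid\langle\!\langle A\rangle\!\rangle\gamma\mid[\![A]\!]\gamma$ and path formulas $\gamma::=\varphi\mid\gamma\wedge\gamma\mid\gamma\vee\gamma\mid X\gamma\mid\gamma U\gamma\mid\gamma W\gamma$, where $\wedge,\vee$ are interpreted by $\sqcap,\sqcup$, $[\![\langle\!\langle A\rangle\!\rangle\gamma]\!]_{M,q}=\bigsqcup_{s_A}\inf_{\lambda\in out(q,s_A)}[\![\gamma]\!]_{M,\lambda}$, $[\![[\![A]\!]\gamma]\!]_{M,q}=\inf_{s_A}\bigsqcup_{\lambda\in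 out(q,s_A)}[\![\gamma]\!]_{M,\lambda}$, and $[\![\varphi_1\to\varphi_2]\!]_{M,q}=\top$ if $[\![\varphi_1]\!]_{M,q}\le[\![\varphi_2]\!]_{M,q}$ and $\bot$ otherwise. A reduction $f:L\to\{\bot,\top\}$ yields the model $f(M)$ with valuation $f(V(p,q))$ and constants interpreted by $f\circ\sigma$. It is known that if $\mathcal{L}$ contains a chain or anti-chain of cardinality $n$ and the target sublattice has fewer than $n$ elements, then no function satisfies the translation condition for languages with implication formulas. *)

From HB Require Import structures.
From mathcomp Require Import all_boot all_order.
From mathcomp Require Import boolp.

Set Implicit Arguments.
Unset Strict Implicit.
Unset Printing Implicit Defensive.

Import Order.Theory.
Local Open Scope order_scope.

Inductive sform (Agt AP C : finType) : Type :=
  | FConst : C -> sform Agt AP C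
  | FProp  : AP -> sform Agt AP C
  | FAnd   : sform Agt AP C -> sform Agt AP C -> sform Agt AP C
  | FOr    : sform Agt AP C -> sform Agt AP C -> sform Agt AP C
  | FImp   : sform Agt AP C -> sform Agt AP C -> sform Agt AP C
  | FEx    : {set Agt} -> pform Agt AP C -> sform Agt AP C
  | FAll   : {set Agt} -> pform Agt AP C -> sform Agt AP C
with pform (Agt AP C : finType) : Type :=
  | PState : sform Agt AP C -> pform Agt AP C
  | PAnd   : pform Agt AP C -> pform Agt AP C -> pform Agt AP C
  | POr    : pform Agt AP C -> pform Agt AP C -> pform Agt AP C
  | PNext  : pform Agt AP C -> pform Agt AP C
  | PUntil : pform Agt AP C -> pform Agt AP C -> pform Agt AP C
  | PWUntil : pform Agt AP C -> pform Agt AP C -> pform Agt AP C.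

Record mvCGS (disp : Order.disp_t) (L : finTBLatticeType disp)
    (Agt Q Act AP C : finType) := MvCGS {
  avail : Agt -> Q -> {set Act};
  avail_ne : forall a q, avail a q != set0;
  trans : Q -> (Agt -> Act) -> Q;
  val : AP -> Q -> L;
  sigma : C -> L
}.

Section Semantics.
Variables (disp : Order.disp_t) (L : finTBLatticeType disp).

Definition sup_fam (I : Type) (F : I -> L) : L :=
  \join_(x : L | `[< exists i, F i = x >]) x.
Definition inf_fam (I : Type) (F : I -> L) : L :=
  \meet_(x : L | `[< exists i, F i = x >]) x.

Variables (Agt Q Act AP C : finType) (M : mvCGS L Agt Q Act AP C).

Definition suffix (l : nat -> Q) (i : nat) : nat -> Q := fun n => l (i + n).

Definition history (l : nat -> Q) (i : nat) : seq Q := [seq l j | j <- iota 0 i.+1].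

(* perfect-recall strategy profile (one strategy per agent) *)
Definition strategy := Agt -> seq Q -> Act.
Definition valid_strategy (s : strategy) : Prop :=
  forall a h q, s a (rcons h q) \in avail M a q.

Definition out (q : Q) (A : {set Agt}) (s : strategy) (l : nat -> Q) : Prop :=
  l 0 = q /\
  forall i, exists m : Agt -> Act,
    (forall b, m b \in avail M b (l i)) /\
    (forall a, a \in A -> m a = s a (history l i)) /\
    l i.+1 = trans M (l i) m.

Fixpoint ssem (phi : sform Agt AP C) (q : Q) {struct phi} : L :=
  match phi with
  | FConst c => sigma M c
  | FProp p => val M p q
  | FAnd a b => ssem a q `&` ssem b q
  | FOr a b => ssem a q `|` ssem b q
  | FImp a b => if ssem a q <= ssem b q then \top else \bot
  | FEx A g =>
      sup_fam (fun s : {s : strategy | valid_strategy s} =>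
        inf_fam (fun l : {l : nat -> Q | out q A (proj1_sig s) l} =>
          psem g (proj1_sig l)))
  | FAll A g =>
      inf_fam (fun s : {s : strategy | valid_strategy s} =>
        sup_fam (fun l : {l : nat -> Q | out q A (proj1_sig s) l} =>
          psem g (proj1_sig l)))
  end
with psem (g : pform Agt AP C) (l : nat -> Q) {struct g} : L :=
  match g with
  | PState phi => ssem phi (l 0)
  | PAnd a b => psem a l `&` psem b l
  | POr a b => psem a l `|` psem b l
  | PNext a => psem a (suffix l 1)
  | PUntil a b =>
      sup_fam (fun i : nat => psem b (suffix l i) `&`
                 inf_fam (fun j : 'I_i => psem a (suffix l j)))
  | PWUntil a b =>
      sup_fam (fun i : nat => psem b (suffix l i) `&`
                 inf_fam (fun j : 'I_i => psem a (suffix l j)))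
      `|` inf_fam (fun j : nat => psem a (suffix l j))
  end.

End Semantics.

Section Reduction.
Variables (disp : Order.disp_t) (L : finTBLatticeType disp).

(* f : L -> {bot, top} (onto); the 2-valued lattice is the sublattice
   {bot, top} of L *)
Definition reduction_to_2 (f : L -> L) : Prop :=
  (forall y, f y = \bot \/ f y = \top) /\
  (exists y, f y = \bot) /\ (exists y, f y = \top).

Definition fmodel (f : L -> L) (Agt Q Act AP C : finType)
  (M : mvCGS L Agt Q Act AP C) : mvCGS L Agt Q Act AP C :=
  @MvCGS disp L Agt Q Act AP C (avail M) (@avail_ne _ _ _ _ _ _ _ M) (trans M)
    (fun p q => f (val M p q)) (fun c => f (sigma M c)).

Definition translation_condition (f : L -> L) : Prop :=
  forall (Agt Q Act AP C : finType) (M : mvCGS L Agt Q Act AP C)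
         (phi : sform Agt AP C) (q : Q) (x : L),
    (x = \bot \/ x = \top) ->
    (f (ssem M phi q) = x <-> ssem (fmodel f M) phi q = x).

End Reduction.

(* Take a one-state model whose constants name every element of L.  There
   [c1 -> c2] denotes the truth value [[c1 <= c2]] (\top or \bot), so the
   translation condition forces [f [a <= b] = [f a <= f b]].  This pins down
   [f \top = \top] and [f \bot = \bot]; then an element [m] strictly between
   [\bot] and [\top] can be sent neither to [\bot] (compare [m <= \bot]) nor
   to [\top] (compare [\top <= m]). *)
From HB Require Import structures.
From mathcomp Require Import all_boot all_order.
From mathcomp Require Import boolp.

Set Implicit Arguments.
Unset Strict Implicit.
Unset Printing Implicit Defensive.

Import Order.Theory.

Local Open Scope order_scope.

Section TwoValued.
Variables (disp : Order.disp_t) (L : finTBLatticeType disp).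

Definition truth_val (b : bool) : L := if b then \top else \bot.

Lemma card_gt2_exists_mid :
  (2 < #|L|)%N -> exists m : L, m != \bot /\ m != \top.
Proof.
move=> card_gt2; apply: contrapT => no_mid.
have sub_bot_top : [set: L] \subset [set \bot; \top].
  apply/subsetP => z _; rewrite !inE.
  by apply/negPn/negP; rewrite negb_or => /andP[zb zt]; apply: no_mid; exists z.
have := subset_leq_card sub_bot_top; rewrite cardsT cards2 => card_le.
by move: card_gt2; rewrite ltnNge (leq_trans card_le) // ltnS leq_b1.
Qed.

Definition constant_model : mvCGS L unit unit unit unit L :=
  @MvCGS disp L unit unit unit unit L (fun _ _ => [set: unit])
    (fun _ _ => introT (set0Pn _) (ex_intro _ tt (in_setT tt)))
    (fun q _ => q) (fun _ _ => \bot) id.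

Lemma translation_condition_le (f : L -> L) :
  translation_condition f ->
  forall a b : L, f (truth_val (a <= b)) = truth_val (f a <= f b).
Proof.
move=> tc a b.
have two_valued : truth_val (f a <= f b) = \bot \/ truth_val (f a <= f b) = \top.
  by rewrite /truth_val; case: ifP; [right | left].
by apply/(tc _ _ _ _ _ constant_model (FImp (FConst _ _ a) (FConst _ _ b)) tt _ two_valued).
Qed.

Section ReductionCommutingWithLe.
Variable f : L -> L.
Hypothesis f_two_valued : forall y, f y = \bot \/ f y = \top.
Hypothesis f_hits_bot : exists y, f y = \bot.
Hypothesis f_le : forall a b : L, f (truth_val (a <= b)) = truth_val (f a <= f b).

Lemma reduction_top : f \top = \top.
Proof. by have := f_le \top \top; rewrite !lexx. Qed.

Lemma reduction_bot : \bot <> \top :> L -> f \bot = \bot.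
Proof.
move=> bot_top; have [y fy] := f_hits_bot.
have := f_le \top y; rewrite reduction_top fy !le1x /truth_val.
case: eqP => [y_top | _]; first by case: bot_top; rewrite -fy y_top reduction_top.
by case: eqP => // /bot_top.
Qed.

Lemma reduction_forces_two_valued (m : L) : m = \bot \/ m = \top.
Proof.
have [bot_top | /eqP bot_top] := eqVneq (\bot : L) \top.
  by left; apply/eqP; rewrite -lex0 bot_top lex1.
have [-> | m_bot] := eqVneq m \bot; first by left.
have [-> | m_top] := eqVneq m \top; first by right.
have fbot := reduction_bot bot_top.
exfalso; apply: bot_top; rewrite -{1}fbot.
case: (f_two_valued m) => fm.
- have := f_le m \bot; rewrite fm le0x lex0 /truth_val.
  by case: eqP => // m_eq; rewrite m_eq eqxx in m_bot.
- have := f_le \top m; rewrite fm reduction_top lexx le1x /truth_val.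
  by case: eqP => // m_eq; rewrite m_eq eqxx in m_top.
Qed.

End ReductionCommutingWithLe.

End TwoValued.

Local Close Scope order_scope.

Theorem corollary5p10 (disp : Order.disp_t) (L : finTBLatticeType disp) :
  2 < #|L| ->
  ~ exists f : L -> L, reduction_to_2 f /\ translation_condition f.
Proof.
move=> /card_gt2_exists_mid [m [m_bot m_top]] [f [[f_two_valued [f_hits_bot _]] tc]].
have [/eqP | /eqP] := reduction_forces_two_valued f_two_valued f_hits_bot
  (translation_condition_le tc) m.
- by rewrite (negbTE m_bot).
- by rewrite (negbTE m_top).
Qed.
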